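(* Let $K_1,K_2>0$. For $0<x\le K_1$, $v>0$ and $x^2v\ge K_2$, \[ \varepsilon_1(x,v)-x\,\overline{\varepsilon_1(1/x,x^2v)}\ll(x^2v)^{-1/2}, \] where the implied constant depends only on $K_1$ and $K_2$, and \[ \varepsilon_1(x,v)=-\int_v^\infty\frac{e^{2\pi itx}}{\pi t}(\log t+2\gamma)\,dt+\frac{e^{2\pi ivx}}{v}\Delta(v)-\int_v^\infty\Delta(t)\frac{e^{2\pi itx}}{t^2}\,dt. \]
   Context: $\tau(n)$ is the number of divisors of $n$, $\gamma$ is Euler's constant, and for $t>0$, $\Delta(t)=\sum_{n\le t}\tau(n)-t(\log t+2\gamma-1)$. The first integral in $\varepsilon_1$ is an improper integral. *)

From Stdlib Require Import Reals Lra List.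
From Coquelicot Require Import Coquelicot.
Import ListNotations.
Open Scope R_scope.

Definition tau (n : nat) : nat :=
  length (filter (fun d => Nat.eqb (n mod d) 0) (seq 1 n)%nat).

Definition divisor_sum (N : nat) : nat := fold_right Nat.add 0%nat (map tau (seq 1 N)).

Definition EulerGamma : R :=
  real (Lim_seq (fun n => sum_f_R0 (fun k => / INR (k + 1)) n - ln (INR (n + 1)))).

Definition Delta (t : R) : R :=
  INR (divisor_sum (Z.to_nat (Int_part t))) - t * (ln t + 2 * EulerGamma - 1).

Definition ImpInt (f : R -> R) (a : R) : R :=
  real (Lim (fun T => RInt f a T) p_infty).

(* real and imaginary parts of eps_1(x, v), using e^{2 pi i t x} = cos + i sin *)
Definition eps1_re (x v : R) : R :=
  - ImpInt (fun t => cos (2 * PI * t * x) / (PI * t) * (ln t + 2 * EulerGamma)) v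
  + cos (2 * PI * v * x) / v * Delta v
  - ImpInt (fun t => Delta t * cos (2 * PI * t * x) / t ^ 2) v.

Definition eps1_im (x v : R) : R :=
  - ImpInt (fun t => sin (2 * PI * t * x) / (PI * t) * (ln t + 2 * EulerGamma)) v
  + sin (2 * PI * v * x) / v * Delta v
  - ImpInt (fun t => Delta t * sin (2 * PI * t * x) / t ^ 2) v.

Definition eps1 (x v : R) : C := (eps1_re x v, eps1_im x v).

(* The two terms are bounded separately; no cancellation between them is needed.
   Dirichlet's hyperbola method gives [D(N) = N ln N + (2 gamma - 1) N + O(sqrt N)],
   hence [|Delta t| <= A sqrt t] for all [t > 0].  In [eps1 y w] the first integral is
   integrated by parts against the primitive of [e^(2 pi i t y)], which is bounded by
   [1 / (2 pi y)], and the other two terms are estimated with [|Delta t| <= A sqrt t];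
   altogether [|eps1 y w| << (1/y + 1) / sqrt w] once [w] is bounded below.  With
   [y = x <= K1], [w = v >= K2 / K1^2], and with [y = 1/x], [w = x^2 v >= K2], both terms
   are [<< 1 / (x sqrt v) = (x^2 v)^(-1/2)]. *)

From Stdlib Require Import Reals Lra Lia ZArith List.
From Coquelicot Require Import Coquelicot.
Open Scope R_scope.

Lemma Lim_seq_between (u : nat -> R) (a b : R) :
  eventually (fun n => a <= u n <= b) -> a <= real (Lim_seq u) <= b.
Proof.
  intros [N HN].
  assert (Hsup : Rbar_le (LimSup_seq u) b).
  { rewrite <- (LimSup_seq_const b). apply LimSup_le. exists N. intros n Hn. apply HN; auto. }
  assert (Hinf : Rbar_le a (LimInf_seq u)).
  { rewrite <- (LimInf_seq_const a). apply LimInf_le. exists N. intros n Hn. apply HN; auto. }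
  pose proof (LimSup_LimInf_seq_le u) as Hle.
  unfold Lim_seq.
  destruct (LimSup_seq u) as [s| |]; destruct (LimInf_seq u) as [i| |];
    simpl in *; try tauto. lra.
Qed.

Lemma ImpInt_abs_le (f : R -> R) (a B : R) :
  (forall T, a <= T -> Rabs (RInt f a T) <= B) -> Rabs (ImpInt f a) <= B.
Proof.
  intros HB. apply Rabs_le, Lim_seq_between.
  destruct (INR_unbounded a) as [N HN].
  exists N. intros n Hn. apply Rabs_le_between, HB. simpl.
  apply Rlt_le, (Rlt_le_trans _ _ _ HN), le_INR, Hn.
Qed.

Lemma ln_le_sub1 y : 0 < y -> ln y <= y - 1.
Proof.
  intros Hy. destruct (Rle_lt_dec (ln y) (y - 1)) as [h|h]; auto.
  apply exp_increasing in h. rewrite exp_ln in h by auto.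
  pose proof (exp_ineq1_le (y - 1)). lra.
Qed.

Lemma ln_ge_1_sub_inv y : 0 < y -> 1 - / y <= ln y.
Proof.
  intros Hy. pose proof (ln_le_sub1 (/ y) (Rinv_0_lt_compat _ Hy)) as H.
  rewrite ln_Rinv in H by auto. lra.
Qed.

Lemma ln_eq_2_ln_sqrt t : 0 < t -> ln t = 2 * ln (sqrt t).
Proof.
  intros ht. rewrite <- (sqrt_sqrt t) at 1 by lra.
  rewrite ln_mult by (apply sqrt_lt_R0; lra). ring.
Qed.

Lemma ln_le_2_sqrt t : 0 < t -> ln t <= 2 * sqrt t - 2.
Proof.
  intros ht. rewrite ln_eq_2_ln_sqrt by auto.
  pose proof (ln_le_sub1 _ (sqrt_lt_R0 t ht)). lra.
Qed.

Lemma ln_ge_2_sub_2_inv_sqrt t : 0 < t -> 2 - 2 / sqrt t <= ln t.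
Proof.
  intros ht. rewrite ln_eq_2_ln_sqrt by auto.
  pose proof (ln_ge_1_sub_inv _ (sqrt_lt_R0 t ht)). unfold Rdiv. lra.
Qed.

(** * Euler's constant *)

Definition euler_seq (n : nat) : R :=
  sum_f_R0 (fun k => / INR (k + 1)) n - ln (INR (n + 1)).

Lemma ln_succ_bounds n :
  / INR (n + 2) <= ln (INR (n + 2)) - ln (INR (n + 1)) <= / INR (n + 1).
Proof.
  assert (h1 : 0 < INR (n + 1)) by (apply lt_0_INR; lia).
  assert (h2 : INR (n + 2) = INR (n + 1) + 1)
    by (replace (n + 2)%nat with (S (n + 1)) by lia; apply S_INR).
  rewrite <- ln_div by lra.
  assert (hq : 0 < INR (n + 2) / INR (n + 1)) by (apply Rdiv_lt_0_compat; lra).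
  pose proof (ln_ge_1_sub_inv _ hq). pose proof (ln_le_sub1 _ hq).
  replace (1 - / (INR (n + 2) / INR (n + 1))) with (/ INR (n + 2)) in * by (rewrite h2; field; lra).
  replace (INR (n + 2) / INR (n + 1) - 1) with (/ INR (n + 1)) in * by (rewrite h2; field; lra).
  lra.
Qed.

Lemma euler_seq_S n :
  euler_seq (S n) = euler_seq n + / INR (n + 2) - (ln (INR (n + 2)) - ln (INR (n + 1))).
Proof.
  unfold euler_seq. rewrite tech5. replace (S n + 1)%nat with (n + 2)%nat by lia. lra.
Qed.

Lemma euler_seq_decreasing n m : (n <= m)%nat -> euler_seq m <= euler_seq n.
Proof.
  induction 1; [lra|]. rewrite euler_seq_S. pose proof (ln_succ_bounds m). lra.
Qed.

Lemma euler_seq_sub_increasing n m : (n <= m)%nat ->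
  euler_seq n - / INR (n + 1) <= euler_seq m - / INR (m + 1).
Proof.
  induction 1; [lra|]. rewrite euler_seq_S. pose proof (ln_succ_bounds m).
  replace (S m + 1)%nat with (m + 2)%nat by lia. lra.
Qed.

Lemma EulerGamma_bounds n : euler_seq n - / INR (n + 1) <= EulerGamma <= euler_seq n.
Proof.
  apply Lim_seq_between. exists n. intros m Hm. split.
  - pose proof (euler_seq_sub_increasing n m Hm).
    assert (0 < / INR (m + 1)) by (apply Rinv_0_lt_compat, lt_0_INR; lia).
    unfold euler_seq in *. lra.
  - apply (euler_seq_decreasing n m Hm).
Qed.

(** * Finite sums and divisor counting *)

Fixpoint sum_1n (f : nat -> R) (n : nat) : R :=
  match n with O => 0 | S k => sum_1n f k + f (S k) end.

Definition iverson (b : bool) : R := if b then 1 else 0.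

Lemma sum_1n_ext f g n :
  (forall k, (1 <= k <= n)%nat -> f k = g k) -> sum_1n f n = sum_1n g n.
Proof.
  induction n as [|n IH]; intros H; simpl; auto.
  rewrite IH by (intros k Hk; apply H; lia). rewrite H by lia. auto.
Qed.

Lemma sum_1n_plus f g n : sum_1n (fun k => f k + g k) n = sum_1n f n + sum_1n g n.
Proof. induction n; simpl; lra. Qed.

Lemma sum_1n_minus f g n : sum_1n (fun k => f k - g k) n = sum_1n f n - sum_1n g n.
Proof. induction n; simpl; lra. Qed.

Lemma sum_1n_scal c f n : sum_1n (fun k => c * f k) n = c * sum_1n f n.
Proof. induction n; simpl; lra. Qed.

Lemma sum_1n_const c n : sum_1n (fun _ => c) n = INR n * c.
Proof. induction n; simpl sum_1n; [simpl; lra|]. rewrite S_INR. lra. Qed.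

Lemma sum_1n_exchange (f : nat -> nat -> R) n m :
  sum_1n (fun a => sum_1n (fun b => f a b) m) n = sum_1n (fun b => sum_1n (fun a => f a b) n) m.
Proof.
  induction n as [|n IH]; simpl.
  - induction m; simpl; lra.
  - rewrite IH, <- sum_1n_plus. auto.
Qed.

Lemma sum_1n_iverson_le f s n : (s <= n)%nat ->
  sum_1n (fun k => iverson (k <=? s)%nat * f k) n = sum_1n f s.
Proof.
  induction 1 as [|m Hsm IH].
  - apply sum_1n_ext. intros k Hk. unfold iverson. rewrite (proj2 (Nat.leb_le k s)) by lia. lra.
  - cbn [sum_1n]. rewrite IH. unfold iverson. rewrite (proj2 (Nat.leb_gt (S m) s)) by lia. lra.
Qed.

Definition harmonic (n : nat) : R := sum_1n (fun k => / INR k) n.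

Lemma harmonic_S_euler_seq n : harmonic (S n) = euler_seq n + ln (INR (n + 1)).
Proof.
  unfold euler_seq, harmonic. induction n as [|n IH]; [simpl; lra|].
  change (sum_1n (fun k => / INR k) (S (S n)))
    with (sum_1n (fun k => / INR k) (S n) + / INR (S (S n))).
  rewrite IH, tech5. replace (S n + 1)%nat with (S (S n)) by lia.
  replace (n + 1)%nat with (S n) by lia. lra.
Qed.

Lemma harmonic_sub_ln_bounds s : (1 <= s)%nat ->
  EulerGamma <= harmonic s - ln (INR s) <= EulerGamma + / INR s.
Proof.
  intros Hs. destruct s as [|s]; [lia|].
  rewrite harmonic_S_euler_seq. pose proof (EulerGamma_bounds s).
  replace (s + 1)%nat with (S s) in * by lia. lra.
Qed.

Lemma fold_right_add_acc l x : fold_right Nat.add x l = (fold_right Nat.add 0 l + x)%nat.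
Proof. induction l; simpl; lia. Qed.

Lemma divisor_sum_eq_sum_tau N : INR (divisor_sum N) = sum_1n (fun n => INR (tau n)) N.
Proof.
  induction N as [|N IH]; [reflexivity|].
  unfold divisor_sum in *. rewrite seq_S, map_app, fold_right_app. cbn [map fold_right].
  rewrite fold_right_add_acc, plus_INR, IH, Nat.add_0_r.
  replace (1 + N)%nat with (S N) by lia. reflexivity.
Qed.

Lemma length_filter_seq (p : nat -> bool) n :
  INR (length (filter p (seq 1 n))) = sum_1n (fun d => iverson (p d)) n.
Proof.
  induction n as [|n IH]; [reflexivity|].
  rewrite seq_S, filter_app, length_app, plus_INR, IH. simpl.
  replace (1 + n)%nat with (S n) by lia. unfold iverson. destruct (p (S n)); simpl; lra.
Qed.

Lemma div_succ N d : (1 <= d)%nat ->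
  (S N / d = N / d + if (S N mod d =? 0)%nat then 1 else 0)%nat.
Proof.
  intros Hd.
  pose proof (Nat.div_mod N d ltac:(lia)). pose proof (Nat.mod_upper_bound N d ltac:(lia)).
  set (q := (N / d)%nat) in *. set (r := (N mod d)%nat) in *.
  destruct (Nat.eq_dec (S r) d).
  - rewrite <- (Nat.div_unique (S N) d (S q) 0) by lia.
    rewrite <- (Nat.mod_unique (S N) d (S q) 0) by lia. simpl. lia.
  - rewrite <- (Nat.div_unique (S N) d q (S r)) by lia.
    rewrite <- (Nat.mod_unique (S N) d q (S r)) by lia. simpl. lia.
Qed.

Lemma divisor_sum_eq_sum_div N : INR (divisor_sum N) = sum_1n (fun d => INR (N / d)) N.
Proof.
  rewrite divisor_sum_eq_sum_tau. induction N as [|N IH]; [reflexivity|].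
  cbn [sum_1n]. rewrite IH. unfold tau. rewrite length_filter_seq. cbn [sum_1n].
  rewrite Nat.div_same, Nat.Div0.mod_same by lia.
  rewrite (sum_1n_ext (fun d => INR (S N / d))
             (fun d => INR (N / d) + iverson (S N mod d =? 0)%nat)).
  - rewrite sum_1n_plus. simpl. lra.
  - intros d Hd. rewrite div_succ, plus_INR by lia. unfold iverson.
    destruct (S N mod d =? 0)%nat; simpl; lra.
Qed.

Lemma div_eq_count N d : (1 <= d)%nat ->
  INR (N / d) = sum_1n (fun b => iverson (d * b <=? N)%nat) N.
Proof.
  intros Hd.
  assert (Hcount : forall M, sum_1n (fun b => iverson (d * b <=? N)%nat) M = INR (Nat.min M (N / d))).
  { induction M as [|M IH]; [reflexivity|].
    cbn [sum_1n]. rewrite IH. unfold iverson.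
    destruct (d * S M <=? N)%nat eqn:E.
    - apply Nat.leb_le in E.
      assert (S M <= N / d)%nat by (apply Nat.div_le_lower_bound; lia).
      rewrite !Nat.min_l, S_INR by lia. lra.
    - apply Nat.leb_gt in E.
      assert (N / d < S M)%nat by (apply Nat.Div0.div_lt_upper_bound; lia).
      rewrite !Nat.min_r by lia. lra. }
  rewrite Hcount, Nat.min_r; auto. apply Nat.Div0.div_le_upper_bound. nia.
Qed.

(* Each lattice point under the hyperbola [a b <= N] has [a <= s] or [b <= s],
   and every point with both is under it. *)
Lemma hyperbola_iverson N a b : let s := Nat.sqrt N in
  iverson (a * b <=? N)%nat =
    iverson (a * b <=? N)%nat * iverson (a <=? s)%nat
  + iverson (b * a <=? N)%nat * iverson (b <=? s)%nat
  - iverson (a <=? s)%nat * iverson (b <=? s)%nat.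
Proof.
  intros s. pose proof (Nat.sqrt_spec N ltac:(lia)) as Hs. fold s in Hs.
  rewrite (Nat.mul_comm b a). unfold iverson.
  destruct (a * b <=? N)%nat eqn:E1; destruct (a <=? s)%nat eqn:E2;
    destruct (b <=? s)%nat eqn:E3; try lra;
    apply Nat.leb_le in E1 || apply Nat.leb_gt in E1;
    apply Nat.leb_le in E2 || apply Nat.leb_gt in E2;
    apply Nat.leb_le in E3 || apply Nat.leb_gt in E3; nia.
Qed.

Lemma hyperbola_method N : let s := Nat.sqrt N in
  INR (divisor_sum N) = 2 * sum_1n (fun a => INR (N / a)) s - INR s * INR s.
Proof.
  intros s. pose proof (Nat.sqrt_spec N ltac:(lia)) as Hs. fold s in Hs.
  assert (HsN : (s <= N)%nat) by nia.
  assert (Hstrip : sum_1n (fun a => sum_1n (fun b =>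
                     iverson (a * b <=? N)%nat * iverson (a <=? s)%nat) N) N
                   = sum_1n (fun a => INR (N / a)) s).
  { rewrite <- (sum_1n_iverson_le _ s N HsN). apply sum_1n_ext. intros a Ha.
    rewrite (div_eq_count N a) by lia. rewrite <- sum_1n_scal.
    apply sum_1n_ext. intros. apply Rmult_comm. }
  assert (Hsquare : sum_1n (fun a => sum_1n (fun b =>
                      iverson (a <=? s)%nat * iverson (b <=? s)%nat) N) N = INR s * INR s).
  { rewrite (sum_1n_ext _ (fun a => iverson (a <=? s)%nat * INR s)).
    - rewrite sum_1n_iverson_le, sum_1n_const by auto. reflexivity.
    - intros a Ha. rewrite sum_1n_scal. f_equal.
      rewrite (sum_1n_ext _ (fun b => iverson (b <=? s)%nat * 1)) by (intros; lra).
      rewrite sum_1n_iverson_le, sum_1n_const by auto. lra. }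
  rewrite divisor_sum_eq_sum_div.
  rewrite (sum_1n_ext _ (fun a => sum_1n (fun b =>
     iverson (a * b <=? N)%nat * iverson (a <=? s)%nat
   + iverson (b * a <=? N)%nat * iverson (b <=? s)%nat
   - iverson (a <=? s)%nat * iverson (b <=? s)%nat) N)).
  2:{ intros a Ha. rewrite div_eq_count by lia. apply sum_1n_ext. intros b Hb.
      apply hyperbola_iverson. }
  rewrite (sum_1n_ext _ (fun a =>
      sum_1n (fun b => iverson (a * b <=? N)%nat * iverson (a <=? s)%nat) N
    + sum_1n (fun b => iverson (b * a <=? N)%nat * iverson (b <=? s)%nat) N
    - sum_1n (fun b => iverson (a <=? s)%nat * iverson (b <=? s)%nat) N))
    by (intros; rewrite <- sum_1n_plus, <- sum_1n_minus; reflexivity).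
  rewrite sum_1n_minus, sum_1n_plus,
    (sum_1n_exchange (fun a b => iverson (b * a <=? N)%nat * iverson (b <=? s)%nat)).
  rewrite Hstrip, Hsquare. lra.
Qed.

(** * Dirichlet's divisor problem: the elementary bound *)

Lemma div_INR_bounds N a : (1 <= a)%nat ->
  INR N / INR a - 1 <= INR (N / a) <= INR N / INR a.
Proof.
  intros Ha. pose proof (Nat.div_mod N a ltac:(lia)) as Hdm.
  pose proof (Nat.mod_upper_bound N a ltac:(lia)) as Hr.
  assert (hN : INR N = INR a * INR (N / a) + INR (N mod a))
    by (rewrite Hdm at 1; rewrite plus_INR, mult_INR; auto).
  assert (ha : 0 < INR a) by (apply lt_0_INR; lia).
  assert (hr : INR (N mod a) < INR a) by (apply lt_INR; auto).
  pose proof (pos_INR (N mod a)).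
  rewrite hN. split; apply (Rmult_le_reg_r (INR a)); auto; field_simplify; lra.
Qed.

Lemma sum_div_bounds N s :
  INR N * harmonic s - INR s <= sum_1n (fun a => INR (N / a)) s <= INR N * harmonic s.
Proof.
  unfold harmonic. induction s as [|s IH]; [simpl; lra|].
  cbn [sum_1n]. pose proof (div_INR_bounds N (S s) ltac:(lia)).
  rewrite S_INR in *. unfold Rdiv in *. lra.
Qed.

Lemma mul_ln_sub_2ln_bounds n s : 1 <= s -> s * s <= n <= s * s + 2 * s ->
  0 <= n * (ln n - 2 * ln s) <= 6 * s.
Proof.
  intros hs hn. set (q := n / (s * s)).
  assert (hq : ln n - 2 * ln s = ln q) by (unfold q; rewrite ln_div, ln_mult by nra; ring).
  assert (hq1 : 1 <= q) by (unfold q; apply (Rmult_le_reg_r (s * s)); [nra|]; field_simplify; nra).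
  assert (hq2 : q - 1 <= 2 / s) by (unfold q; apply (Rmult_le_reg_r (s * s)); [nra|]; field_simplify; nra).
  pose proof (ln_ge_1_sub_inv q ltac:(lra)). pose proof (ln_le_sub1 q ltac:(lra)).
  assert (0 <= 1 - / q) by (pose proof (Rinv_le_contravar 1 q ltac:(lra) hq1); rewrite Rinv_1 in *; lra).
  assert (n * (2 / s) <= 6 * s) by (apply (Rmult_le_reg_r s); [lra|]; field_simplify; nra).
  rewrite hq. split; nra.
Qed.

Lemma divisor_sum_asymptotic N :
  Rabs (INR (divisor_sum N) - (INR N * ln (INR N) + (2 * EulerGamma - 1) * INR N))
    <= 8 * INR (Nat.sqrt N).
Proof.
  destruct (Nat.eq_dec N 0) as [->|HN].
  { simpl. rewrite Rmult_0_l, !Rmult_0_r, Rplus_0_r, Rminus_0_r, Rabs_R0. lra. }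
  rewrite hyperbola_method.
  set (s := Nat.sqrt N).
  pose proof (Nat.sqrt_spec N ltac:(lia)) as Hsq. fold s in Hsq.
  assert (Hs1 : (1 <= s)%nat) by (destruct s; nia).
  pose proof (harmonic_sub_ln_bounds s Hs1) as Hharm.
  pose proof (sum_div_bounds N s) as Hsum.
  set (n := INR N) in *. set (sg := INR s) in *.
  assert (hsg : 1 <= sg) by (apply (le_INR 1); lia).
  assert (hn : sg * sg <= n <= sg * sg + 2 * sg).
  { unfold n, sg. split; [rewrite <- mult_INR; apply le_INR; lia|].
    replace (INR s * INR s + 2 * INR s) with (INR (s * s + 2 * s))
      by (rewrite plus_INR, !mult_INR; simpl; lra).
    apply le_INR; lia. }
  pose proof (mul_ln_sub_2ln_bounds n sg hsg hn) as HL.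
  set (H := harmonic s) in *. set (Sm := sum_1n (fun a => INR (N / a)) s) in *.
  assert (Hgap : 0 <= n * (H - ln sg - EulerGamma) <= 3 * sg).
  { split; [apply Rmult_le_pos; nra|].
    apply Rle_trans with (n / sg).
    - unfold Rdiv. apply Rmult_le_compat_l; nra.
    - apply (Rmult_le_reg_r sg); [lra|]. field_simplify; nra. }
  replace (2 * Sm - sg * sg - (n * ln n + (2 * EulerGamma - 1) * n))
    with (2 * (Sm - n * H) + 2 * (n * (H - ln sg - EulerGamma))
          - n * (ln n - 2 * ln sg) + (n - sg * sg)) by ring.
  apply Rabs_le. lra.
Qed.

Lemma floor_nat_bounds t : 0 <= t ->
  INR (Z.to_nat (Int_part t)) <= t < INR (Z.to_nat (Int_part t)) + 1.
Proof.
  intros ht. pose proof (base_Int_part t) as [h1 h2].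
  assert (0 <= Int_part t)%Z by (assert (-1 < Int_part t)%Z by (apply lt_IZR; lra); lia).
  rewrite INR_IZR_INZ, Z2Nat.id by auto. lra.
Qed.

Lemma INR_sqrt_le N : INR (Nat.sqrt N) <= sqrt (INR N).
Proof.
  pose proof (Nat.sqrt_spec N ltac:(lia)) as Hsq.
  rewrite <- (sqrt_square (INR (Nat.sqrt N))) by apply pos_INR.
  apply sqrt_le_1; [pose proof (pos_INR (Nat.sqrt N)); nra | apply pos_INR |].
  rewrite <- mult_INR. apply le_INR. lia.
Qed.

Lemma le_sqrt_of_le_1 d t : 0 <= d <= 1 -> d <= t -> d <= sqrt t.
Proof.
  intros hd hdt. apply Rle_trans with (sqrt d); [|apply sqrt_le_1; lra].
  pose proof (sqrt_le_1 d 1 ltac:(lra) ltac:(lra) ltac:(lra)) as h1. rewrite sqrt_1 in h1.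
  pose proof (sqrt_sqrt d ltac:(lra)). pose proof (sqrt_pos d). nra.
Qed.

Lemma xlnx_sub_floor_le N t : 0 < t -> INR N <= t < INR N + 1 ->
  Rabs (t * ln t - INR N * ln (INR N)) <= 2 * sqrt t.
Proof.
  intros ht [hNt htN]. pose proof (sqrt_lt_R0 t ht) as hs.
  pose proof (ln_le_2_sqrt t ht) as hup.
  destruct N as [|N].
  - simpl INR in *. rewrite Rmult_0_l, Rminus_0_r.
    pose proof (ln_ge_2_sub_2_inv_sqrt t ht). pose proof (ln_le_sub1 t ht).
    assert (t * (2 / sqrt t) = 2 * sqrt t)
      by (rewrite <- (sqrt_sqrt t) at 1 by lra; field; lra).
    rewrite Rabs_left1 by nra. nra.
  - set (n := INR (S N)) in *.
    assert (hn : 1 <= n) by (apply (le_INR 1); lia).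
    assert (hlnn : 0 <= ln n) by (rewrite <- ln_1; apply ln_le; lra).
    assert (hlt : ln n <= ln t) by (apply ln_le; lra).
    assert (hdiff : n * (ln t - ln n) <= t - n).
    { rewrite <- ln_div by lra.
      pose proof (ln_le_sub1 (t / n) ltac:(apply Rdiv_lt_0_compat; lra)).
      replace (t - n) with (n * (t / n - 1)) by (field; lra). nra. }
    replace (t * ln t - n * ln n) with ((t - n) * ln t + n * (ln t - ln n)) by ring.
    apply Rabs_le. split; nra.
Qed.

Lemma Delta_le_sqrt : exists A, 0 <= A /\ forall t, 0 < t -> Rabs (Delta t) <= A * sqrt t.
Proof.
  set (g := Rabs (2 * EulerGamma - 1)).
  exists (10 + g). split; [pose proof (Rabs_pos (2 * EulerGamma - 1)); unfold g; lra|].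
  intros t ht. unfold Delta.
  set (N := Z.to_nat (Int_part t)). set (n := INR N).
  pose proof (floor_nat_bounds t ltac:(lra)) as HN. fold N n in HN.
  assert (Hmain : 8 * INR (Nat.sqrt N) <= 8 * sqrt t).
  { pose proof (INR_sqrt_le N). pose proof (sqrt_le_1 n t (pos_INR N) ltac:(lra) ltac:(lra)).
    unfold n in *. lra. }
  pose proof (divisor_sum_asymptotic N) as HD. fold n in HD.
  pose proof (xlnx_sub_floor_le N t ht HN) as HL. fold n in HL.
  assert (Hfrac : Rabs ((2 * EulerGamma - 1) * (t - n)) <= g * sqrt t).
  { rewrite Rabs_mult. fold g. apply Rmult_le_compat_l; [apply Rabs_pos|].
    rewrite Rabs_right by lra. apply le_sqrt_of_le_1; pose proof (pos_INR N) as hn0; fold n in hn0; lra. }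
  replace (INR (divisor_sum N) - t * (ln t + 2 * EulerGamma - 1)) with
    ((INR (divisor_sum N) - (n * ln n + (2 * EulerGamma - 1) * n))
     - (t * ln t - n * ln n) - (2 * EulerGamma - 1) * (t - n)) by ring.
  eapply Rle_trans; [apply Rabs_triang|]. rewrite Rabs_Ropp.
  eapply Rle_trans; [apply Rplus_le_compat_r, Rabs_triang|]. rewrite Rabs_Ropp.
  lra.
Qed.

(** * Integrals against [Delta] *)

(* On [[m, m+1]], [Delta] agrees with the smooth function
   [t |-> D(m) - t (ln t + 2 gamma - 1)]. *)
Lemma Delta_ex_RInt_unit (h : R -> R) (m : nat) a b :
  (forall z, 0 < z -> continuous h z) -> 0 < a -> a <= b ->
  INR m <= a -> b <= INR m + 1 -> ex_RInt (fun t => Delta t * h t) a b.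
Proof.
  intros hc ha hab hma hbm.
  apply (ex_RInt_ext (fun t => (INR (divisor_sum m) - t * (ln t + 2 * EulerGamma - 1)) * h t)).
  - intros t Ht. rewrite Rmin_left, Rmax_right in Ht by lra.
    unfold Delta. do 4 f_equal.
    rewrite <- (Nat2Z.id m). f_equal. apply Int_part_spec.
    rewrite <- INR_IZR_INZ. lra.
  - apply (@ex_RInt_continuous R_CompleteNormedModule). intros z Hz.
    rewrite Rmin_left, Rmax_right in Hz by lra.
    apply (continuous_mult (fun t => INR (divisor_sum m) - t * (ln t + 2 * EulerGamma - 1)) h);
      [|apply hc; lra].
    apply (@ex_derive_continuous R_AbsRing R_NormedModule). auto_derive. lra.
Qed.

Lemma Delta_ex_RInt (h : R -> R) a b :
  (forall z, 0 < z -> continuous h z) -> 0 < a -> a <= b ->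
  ex_RInt (fun t => Delta t * h t) a b.
Proof.
  intros hc ha hab.
  pose proof (floor_nat_bounds a ltac:(lra)) as Ha.
  set (m := Z.to_nat (Int_part a)) in *.
  assert (Hsteps : forall k b, a <= b -> b <= INR (m + S k) ->
            ex_RInt (fun t => Delta t * h t) a b).
  { intros k; induction k as [|k IH]; intros b' h1 h2.
    - rewrite plus_INR, S_INR, INR_0 in h2. apply (Delta_ex_RInt_unit h m); auto; lra.
    - destruct (Rle_lt_dec b' (INR (m + S k))) as [h3|h3]; [apply IH; auto|].
      assert (Hmk : INR m + 1 <= INR (m + S k))
        by (rewrite plus_INR, S_INR; pose proof (pos_INR k); lra).
      apply (ex_RInt_Chasles _ a (INR (m + S k)) b').
      + apply IH; lra.
      + replace (m + S (S k))%nat with (S (m + S k)) in h2 by lia. rewrite S_INR in h2.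
        apply (Delta_ex_RInt_unit h (m + S k)); auto; lra. }
  destruct (INR_unbounded b) as [k Hk].
  apply (Hsteps k); auto. rewrite plus_INR, S_INR. pose proof (pos_INR m). lra.
Qed.

Lemma is_RInt_inv_pow32 K w T : 0 < w -> w <= T ->
  is_RInt (fun t => K / (t * sqrt t)) w T (2 * K / sqrt w - 2 * K / sqrt T).
Proof.
  intros hw hT.
  replace (2 * K / sqrt w - 2 * K / sqrt T)
    with (minus ((fun t => - 2 * K / sqrt t) T) ((fun t => - 2 * K / sqrt t) w))
    by (unfold minus, plus, opp; simpl; field;
        split; apply Rgt_not_eq, sqrt_lt_R0; lra).
  apply (@is_RInt_derive R_CompleteNormedModule (fun t => - 2 * K / sqrt t)); intros x Hx;
    rewrite Rmin_left, Rmax_right in Hx by lra;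
    pose proof (sqrt_lt_R0 x ltac:(lra)) as hs.
  - auto_derive; [lra|].
    replace (x * sqrt x) with (sqrt x * sqrt x * sqrt x) by (rewrite sqrt_sqrt; lra).
    field. lra.
  - apply (@ex_derive_continuous R_AbsRing R_NormedModule). auto_derive. nra.
Qed.

Lemma RInt_le_inv_pow32 (f : R -> R) K w T : 0 < w -> w <= T -> 0 <= K ->
  ex_RInt f w T -> (forall t, w <= t <= T -> Rabs (f t) <= K / (t * sqrt t)) ->
  Rabs (RInt f w T) <= 2 * K / sqrt w.
Proof.
  intros hw hT hK hf hbound.
  apply Rle_trans with (2 * K / sqrt w - 2 * K / sqrt T).
  - apply (norm_RInt_le f (fun t => K / (t * sqrt t)) w T); auto.
    + exact (@RInt_correct R_CompleteNormedModule f w T hf).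
    + apply is_RInt_inv_pow32; auto.
  - assert (0 <= 2 * K / sqrt T)
      by (apply Rmult_le_pos; [lra | apply Rlt_le, Rinv_0_lt_compat, sqrt_lt_R0; lra]).
    lra.
Qed.

Lemma RInt_mul_le_by_parts (F f g g' : R -> R) k M w T :
  0 < w -> w <= T -> 0 <= k -> 0 <= M ->
  (forall t, is_derive F t (f t)) -> (forall t, continuous f t) ->
  (forall t, w <= t -> is_derive g t (g' t)) -> (forall t, w <= t -> continuous g' t) ->
  (forall t, Rabs (F t) <= k) ->
  (forall t, w <= t -> Rabs (g t) <= M / sqrt t) ->
  (forall t, w <= t -> Rabs (g' t) <= M / (t * sqrt t)) ->
  Rabs (RInt (fun t => f t * g t) w T) <= 4 * k * M / sqrt w.
Proof.
  intros hw hT hk hM hF hf hg hg' hFk hgM hg'M.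
  assert (HFg' : ex_RInt (fun t => F t * g' t) w T).
  { apply (@ex_RInt_continuous R_CompleteNormedModule). intros t Ht.
    rewrite Rmin_left, Rmax_right in Ht by lra.
    apply (continuous_mult F g'); [|apply hg'; lra].
    apply (@ex_derive_continuous R_AbsRing R_NormedModule). eexists. apply hF. }
  assert (Hparts : RInt (fun t => f t * g t) w T
                   = (F T * g T - F w * g w) - RInt (fun t => F t * g' t) w T).
  { apply is_RInt_unique.
    apply (@is_RInt_scal_derive_l R_CompleteNormedModule F g f g'); intros;
      rewrite ?Rmin_left, ?Rmax_right in * by lra; auto.
    - apply hg; lra.
    - apply hg'; lra.
    - exact (@RInt_correct R_CompleteNormedModule _ w T HFg'). }
  assert (Hbd : Rabs (F T * g T - F w * g w) <= 2 * k * M / sqrt w).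
  { assert (HM : forall t, w <= t -> Rabs (F t * g t) <= k * M / sqrt w).
    { intros t ht. rewrite Rabs_mult. unfold Rdiv. rewrite Rmult_assoc.
      apply Rmult_le_compat; try apply Rabs_pos; auto.
      apply Rle_trans with (M / sqrt t); [apply hgM; lra|].
      apply Rmult_le_compat_l; auto. apply Rinv_le_contravar;
        [apply sqrt_lt_R0; lra | apply sqrt_le_1; lra]. }
    pose proof (HM T hT). pose proof (HM w (Rle_refl w)).
    unfold Rminus. eapply Rle_trans; [apply Rabs_triang|]. rewrite Rabs_Ropp.
    unfold Rdiv in *. lra. }
  assert (Hint : Rabs (RInt (fun t => F t * g' t) w T) <= 2 * (k * M) / sqrt w).
  { apply RInt_le_inv_pow32; auto; [apply Rmult_le_pos; auto|].
    intros t Ht. rewrite Rabs_mult. unfold Rdiv. rewrite Rmult_assoc.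
    apply Rmult_le_compat; try apply Rabs_pos; auto. apply hg'M. lra. }
  rewrite Hparts. unfold Rminus at 1. eapply Rle_trans; [apply Rabs_triang|].
  rewrite Rabs_Ropp. unfold Rdiv in *. lra.
Qed.

(** * The error term [eps1] *)

Lemma PI_ge_1 : 1 <= PI.
Proof. pose proof PI2_1. lra. Qed.

Lemma Rabs_ln_add_le_sqrt a c : 0 <= a -> 0 < c ->
  exists M, 0 <= M /\ forall t, c <= t -> a + Rabs (ln t) <= M * sqrt t.
Proof.
  intros ha hc. exists ((a + 2) * (1 + / c)).
  split; [apply Rmult_le_pos; [lra | pose proof (Rinv_0_lt_compat c hc); lra]|].
  intros t ht. pose proof (sqrt_lt_R0 t ltac:(lra)) as hs.
  pose proof (sqrt_sqrt t ltac:(lra)) as htt.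
  assert (hinv : / sqrt t <= sqrt t / c).
  { apply (Rmult_le_reg_r (sqrt t * c)); [nra|].
    replace (/ sqrt t * (sqrt t * c)) with c by (field; lra).
    replace (sqrt t / c * (sqrt t * c)) with (sqrt t * sqrt t) by (field; lra). lra. }
  pose proof (Rdiv_le_0_compat (sqrt t) c ltac:(lra) hc).
  assert (h1 : 1 <= sqrt t + sqrt t / c).
  { destruct (Rle_lt_dec 1 (sqrt t)).
    - lra.
    - assert (1 <= / sqrt t) by (rewrite <- Rinv_1; apply Rinv_le_contravar; lra). lra. }
  pose proof (ln_le_2_sqrt t ltac:(lra)). pose proof (ln_ge_2_sub_2_inv_sqrt t ltac:(lra)).
  assert (2 / sqrt t <= 2 * (sqrt t / c)) by (apply Rmult_le_compat_l; lra).
  assert (Rabs (ln t) <= 2 * sqrt t + 2 * (sqrt t / c)) by (apply Rabs_le; lra).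
  replace ((a + 2) * (1 + / c) * sqrt t) with (a * (sqrt t + sqrt t / c) + 2 * sqrt t + 2 * (sqrt t / c))
    by (field; lra).
  nra.
Qed.

Definition log_weight (t : R) : R := (ln t + 2 * EulerGamma) / (PI * t).

Definition log_weight' (t : R) : R := (1 - (ln t + 2 * EulerGamma)) / (PI * t ^ 2).

Lemma is_derive_log_weight t : 0 < t -> is_derive log_weight t (log_weight' t).
Proof.
  intros ht. pose proof PI_ge_1. unfold log_weight, log_weight'.
  auto_derive; [nra|]. field. lra.
Qed.

Lemma continuous_log_weight' t : 0 < t -> continuous log_weight' t.
Proof.
  intros ht. pose proof PI_ge_1. apply (@ex_derive_continuous R_AbsRing R_NormedModule).
  unfold log_weight'. auto_derive. nra.
Qed.

(* [eps1_re] and [eps1_im] are [eps1_part cos] and [eps1_part sin]. *)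
Definition eps1_part (tr : R -> R) (y w : R) : R :=
  - ImpInt (fun t => tr (2 * PI * t * y) / (PI * t) * (ln t + 2 * EulerGamma)) w
  + tr (2 * PI * w * y) / w * Delta w
  - ImpInt (fun t => Delta t * tr (2 * PI * t * y) / t ^ 2) w.

Section Eps1PartBound.

Variables (c M A : R) (tr Tr : R -> R).
Hypothesis hc : 0 < c.
Hypothesis hlog : forall t, c <= t -> 1 + Rabs (ln t) + 2 * Rabs EulerGamma <= M * sqrt t.
Hypothesis hA : 0 <= A.
Hypothesis hDelta : forall t, 0 < t -> Rabs (Delta t) <= A * sqrt t.
Hypothesis hTr : forall u, is_derive Tr u (tr u).
Hypothesis hTr1 : forall u, Rabs (Tr u) <= 1.
Hypothesis htr1 : forall u, Rabs (tr u) <= 1.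
Hypothesis htr : forall u, continuous tr u.

Lemma M_nonneg : 0 <= M.
Proof.
  pose proof (hlog c (Rle_refl c)). pose proof (sqrt_lt_R0 c hc).
  pose proof (Rabs_pos (ln c)). pose proof (Rabs_pos EulerGamma). nra.
Qed.

Lemma Rabs_log_weight_le t : c <= t -> Rabs (log_weight t) <= M / sqrt t.
Proof.
  intros ht. pose proof (hlog t ht). pose proof PI_ge_1 as hpi.
  pose proof (sqrt_lt_R0 t ltac:(lra)) as hs. pose proof (sqrt_sqrt t ltac:(lra)).
  pose proof (Rabs_triang (ln t) (2 * EulerGamma)) as htri.
  rewrite Rabs_mult, (Rabs_right 2) in htri by lra.
  unfold log_weight, Rdiv. rewrite Rabs_mult, Rabs_inv, (Rabs_right (PI * t)) by nra.
  apply (Rmult_le_reg_r (PI * t)); [nra|].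
  rewrite Rmult_assoc, Rinv_l, Rmult_1_r by nra.
  replace (M * / sqrt t * (PI * t)) with (PI * (M * sqrt t))
    by (rewrite <- (sqrt_sqrt t) at 3 by lra; field; lra).
  pose proof (Rabs_pos (ln t)). pose proof (Rabs_pos EulerGamma).
  pose proof (Rmult_le_compat_r (M * sqrt t) 1 PI ltac:(lra) hpi). lra.
Qed.

Lemma Rabs_log_weight'_le t : c <= t -> Rabs (log_weight' t) <= M / (t * sqrt t).
Proof.
  intros ht. pose proof (hlog t ht). pose proof PI_ge_1 as hpi.
  pose proof (sqrt_lt_R0 t ltac:(lra)) as hs. pose proof (sqrt_sqrt t ltac:(lra)).
  assert (htri : Rabs (1 - (ln t + 2 * EulerGamma)) <= 1 + Rabs (ln t) + 2 * Rabs EulerGamma).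
  { unfold Rminus. eapply Rle_trans; [apply Rabs_triang|]. rewrite Rabs_R1, Rabs_Ropp.
    pose proof (Rabs_triang (ln t) (2 * EulerGamma)).
    rewrite Rabs_mult, (Rabs_right 2) in * by lra. lra. }
  unfold log_weight', Rdiv. rewrite Rabs_mult, Rabs_inv, (Rabs_right (PI * t ^ 2)) by nra.
  apply (Rmult_le_reg_r (PI * t ^ 2)); [nra|].
  rewrite Rmult_assoc, Rinv_l, Rmult_1_r by nra.
  replace (M * / (t * sqrt t) * (PI * t ^ 2)) with (PI * (M * sqrt t))
    by (replace (t ^ 2) with (t * (sqrt t * sqrt t)) by (rewrite sqrt_sqrt; lra); field; lra).
  pose proof (Rabs_pos (ln t)). pose proof (Rabs_pos EulerGamma).
  pose proof (Rmult_le_compat_r (M * sqrt t) 1 PI ltac:(lra) hpi). lra.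
Qed.

Lemma eps1_part_oscillatory_le y w : 0 < y -> c <= w ->
  Rabs (ImpInt (fun t => tr (2 * PI * t * y) / (PI * t) * (ln t + 2 * EulerGamma)) w)
    <= 2 * M / y / sqrt w.
Proof.
  intros hy hw. pose proof PI_ge_1 as hpi. assert (hPy : 0 < 2 * PI * y) by nra.
  assert (HF : forall t, is_derive (fun t => Tr (2 * PI * t * y) / (2 * PI * y)) t
                                   (tr (2 * PI * t * y))).
  { intros t. auto_derive; [eexists; apply hTr|].
    replace (Derive (fun x => Tr x) (2 * PI * t * y)) with (tr (2 * PI * t * y))
      by (symmetry; apply is_derive_unique, hTr).
    field. lra. }
  assert (Hf : forall t, continuous (fun t => tr (2 * PI * t * y)) t).
  { intros t. apply (continuous_comp (fun t => 2 * PI * t * y) tr); [|apply htr].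
    apply (@ex_derive_continuous R_AbsRing R_NormedModule). auto_derive. auto. }
  assert (HFk : forall t, Rabs (Tr (2 * PI * t * y) / (2 * PI * y)) <= / (2 * PI * y)).
  { intros t. unfold Rdiv. rewrite Rabs_mult, Rabs_inv, (Rabs_right (2 * PI * y)) by lra.
    pose proof (hTr1 (2 * PI * t * y)). pose proof (Rinv_0_lt_compat _ hPy). nra. }
  assert (Hk : 4 * / (2 * PI * y) * M <= 2 * M / y).
  { replace (2 * M / y) with (4 * / (2 * y) * M) by (field; lra).
    pose proof M_nonneg. apply Rmult_le_compat_r, Rmult_le_compat_l; auto; [lra|].
    apply Rinv_le_contravar; nra. }
  apply ImpInt_abs_le. intros T hT.
  rewrite (RInt_ext _ (fun t => tr (2 * PI * t * y) * log_weight t)).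
  2:{ intros t _. unfold log_weight. match goal with |- ?a = ?b => change (@eq R a b) end.
      unfold Rdiv. ring. }
  eapply Rle_trans.
  - apply (RInt_mul_le_by_parts (fun t => Tr (2 * PI * t * y) / (2 * PI * y)) _ _ log_weight'
             (/ (2 * PI * y)) M); auto; try lra.
    + apply Rlt_le, Rinv_0_lt_compat; lra.
    + apply M_nonneg.
    + intros t ht. apply is_derive_log_weight. lra.
    + intros t ht. apply continuous_log_weight'. lra.
    + intros t ht. apply Rabs_log_weight_le. lra.
    + intros t ht. apply Rabs_log_weight'_le. lra.
  - unfold Rdiv. apply Rmult_le_compat_r; [apply Rlt_le, Rinv_0_lt_compat, sqrt_lt_R0; lra|].
    unfold Rdiv in Hk. lra.
Qed.

Lemma eps1_part_boundary_le y w : 0 < w ->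
  Rabs (tr (2 * PI * w * y) / w * Delta w) <= A / sqrt w.
Proof.
  intros hw. pose proof (sqrt_lt_R0 w hw) as hs. pose proof (sqrt_sqrt w ltac:(lra)).
  unfold Rdiv. rewrite !Rabs_mult, Rabs_inv, (Rabs_right w) by lra.
  pose proof (hDelta w hw). pose proof (htr1 (2 * PI * w * y)).
  pose proof (Rabs_pos (tr (2 * PI * w * y))). pose proof (Rabs_pos (Delta w)).
  pose proof (Rinv_0_lt_compat w hw).
  apply Rle_trans with (1 * / w * (A * sqrt w)).
  { apply Rmult_le_compat; nra. }
  right. rewrite <- (sqrt_sqrt w) at 1 by lra. field. lra.
Qed.

Lemma eps1_part_Delta_le y w : 0 < w ->
  Rabs (ImpInt (fun t => Delta t * tr (2 * PI * t * y) / t ^ 2) w) <= 2 * A / sqrt w.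
Proof.
  intros hw. apply ImpInt_abs_le. intros T hT.
  apply RInt_le_inv_pow32; auto.
  - apply (ex_RInt_ext (fun t => Delta t * (tr (2 * PI * t * y) / t ^ 2))).
    { intros t _. unfold Rdiv. symmetry. apply Rmult_assoc. }
    apply Delta_ex_RInt; [|lra..]. intros z hz.
    apply (continuous_mult (fun t => tr (2 * PI * t * y)) (fun t => / t ^ 2)).
    + apply (continuous_comp (fun t => 2 * PI * t * y) tr); [|apply htr].
      apply (@ex_derive_continuous R_AbsRing R_NormedModule). auto_derive. auto.
    + apply (@ex_derive_continuous R_AbsRing R_NormedModule). auto_derive. nra.
  - intros t ht. pose proof (hDelta t ltac:(lra)). pose proof (htr1 (2 * PI * t * y)).
    pose proof (sqrt_lt_R0 t ltac:(lra)) as hs. pose proof (sqrt_sqrt t ltac:(lra)).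
    unfold Rdiv. rewrite !Rabs_mult, Rabs_inv, (Rabs_right (t ^ 2)) by nra.
    pose proof (Rabs_pos (tr (2 * PI * t * y))). pose proof (Rabs_pos (Delta t)).
    apply Rle_trans with (A * sqrt t * 1 * / t ^ 2).
    + apply Rmult_le_compat_r; [apply Rlt_le, Rinv_0_lt_compat; nra | nra].
    + right. replace (t ^ 2) with (t * (sqrt t * sqrt t)) by (rewrite sqrt_sqrt; lra).
      field. lra.
Qed.

Lemma eps1_part_le y w : 0 < y -> c <= w ->
  Rabs (eps1_part tr y w) <= (2 * M / y + 3 * A) / sqrt w.
Proof.
  intros hy hw.
  pose proof (eps1_part_oscillatory_le y w hy hw).
  pose proof (eps1_part_boundary_le y w ltac:(lra)).
  pose proof (eps1_part_Delta_le y w ltac:(lra)).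
  unfold eps1_part. unfold Rminus.
  eapply Rle_trans; [apply Rabs_triang|]. rewrite Rabs_Ropp.
  eapply Rle_trans; [apply Rplus_le_compat_r, Rabs_triang|]. rewrite Rabs_Ropp.
  replace ((2 * M / y + 3 * A) / sqrt w) with (2 * M / y / sqrt w + A / sqrt w + 2 * A / sqrt w)
    by (field; split; [lra | apply Rgt_not_eq, sqrt_lt_R0; lra]).
  lra.
Qed.

End Eps1PartBound.

Lemma Cmod_le_Rabs_add p q : Cmod (p, q) <= Rabs p + Rabs q.
Proof.
  unfold Cmod. change (sqrt (p ^ 2 + q ^ 2) <= Rabs p + Rabs q). rewrite <- (pow2_abs p), <- (pow2_abs q).
  pose proof (Rabs_pos p). pose proof (Rabs_pos q).
  rewrite <- (sqrt_square (Rabs p + Rabs q)) by lra.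
  apply sqrt_le_1; nra.
Qed.

Lemma eps1_Cmod_le c M A y w : 0 < c ->
  (forall t, c <= t -> 1 + Rabs (ln t) + 2 * Rabs EulerGamma <= M * sqrt t) ->
  0 <= A -> (forall t, 0 < t -> Rabs (Delta t) <= A * sqrt t) ->
  0 < y -> c <= w ->
  Cmod (eps1 y w) <= 2 * (2 * M / y + 3 * A) / sqrt w.
Proof.
  intros hc hlog hA hDelta hy hw.
  assert (Hcos : Rabs (eps1_re y w) <= (2 * M / y + 3 * A) / sqrt w).
  { apply (eps1_part_le c M A cos sin); auto.
    - intros u. apply is_derive_sin.
    - intros u. apply Rabs_le, SIN_bound.
    - intros u. apply Rabs_le, COS_bound.
    - intros u. apply continuous_cos. }
  assert (Hsin : Rabs (eps1_im y w) <= (2 * M / y + 3 * A) / sqrt w).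
  { apply (eps1_part_le c M A sin (fun u => - cos u)); auto.
    - intros u. auto_derive; auto. ring.
    - intros u. rewrite Rabs_Ropp. apply Rabs_le, COS_bound.
    - intros u. apply Rabs_le, SIN_bound.
    - intros u. apply continuous_sin. }
  eapply Rle_trans; [apply Cmod_le_Rabs_add|]. unfold Rdiv in *. lra.
Qed.

Lemma eps1_Cmod_le_uniform c : 0 < c ->
  exists M A, 0 <= M /\ 0 <= A /\ forall y w, 0 < y -> c <= w ->
    Cmod (eps1 y w) <= 2 * (2 * M / y + 3 * A) / sqrt w.
Proof.
  intros hc.
  destruct (Rabs_ln_add_le_sqrt (1 + 2 * Rabs EulerGamma) c) as [M [hM hlog]];
    [pose proof (Rabs_pos EulerGamma); lra | auto |].
  destruct Delta_le_sqrt as [A [hA hDelta]].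
  exists M, A. repeat split; auto. intros y w hy hw.
  apply (eps1_Cmod_le c); auto.
  intros t ht. specialize (hlog t ht). lra.
Qed.

Theorem proposition13 :
  forall K1 K2 : R, 0 < K1 -> 0 < K2 ->
  exists C0 : R, forall x v : R,
    0 < x -> x <= K1 -> 0 < v -> K2 <= x ^ 2 * v ->
    Cmod (Cminus (eps1 x v) (Cmult (RtoC x) (Cconj (eps1 (/ x) (x ^ 2 * v)))))
      <= C0 * / sqrt (x ^ 2 * v).
Proof.
  intros K1 K2 hK1 hK2.
  assert (hc : 0 < Rmin K2 (K2 / K1 ^ 2))
    by (apply Rmin_glb_lt; [|apply Rdiv_lt_0_compat, pow_lt]; lra).
  destruct (eps1_Cmod_le_uniform _ hc) as [M [A [hM [hA Heps]]]].
  exists (2 * ((2 * M + 3 * A * K1) + (2 * M * K1 ^ 2 + 3 * A * K1))).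
  intros x v hx hxK hv hK.
  assert (hx2 : x ^ 2 <= K1 ^ 2) by (apply pow_incr; lra).
  assert (hv_c : Rmin K2 (K2 / K1 ^ 2) <= v).
  { apply Rle_trans with (K2 / K1 ^ 2); [apply Rmin_r|].
    apply (Rmult_le_reg_r (K1 ^ 2)); [apply pow_lt; lra|].
    unfold Rdiv. rewrite Rmult_assoc, Rinv_l by (apply pow_nonzero; lra). nra. }
  pose proof (Heps x v hx hv_c) as H1.
  pose proof (Heps (/ x) (x ^ 2 * v) (Rinv_0_lt_compat x hx) (Rle_trans _ _ _ (Rmin_l _ _) hK)) as H2.
  assert (hsq : sqrt (x ^ 2 * v) = x * sqrt v)
    by (rewrite sqrt_mult, <- Rsqr_pow2, sqrt_Rsqr by nra; lra).
  pose proof (sqrt_lt_R0 v hv). rewrite hsq in *.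
  eapply Rle_trans; [apply Cmod_triangle|].
  rewrite Cmod_opp, Cmod_mult, Cmod_conj, Cmod_R, Rabs_right by lra.
  apply Rle_trans with (2 * ((2 * M + 3 * A * x) + (2 * M * x ^ 2 + 3 * A * x)) * / (x * sqrt v)).
  - replace (2 * ((2 * M + 3 * A * x) + (2 * M * x ^ 2 + 3 * A * x)) * / (x * sqrt v))
      with (2 * (2 * M / x + 3 * A) / sqrt v + x * (2 * (2 * M / / x + 3 * A) / (x * sqrt v)))
      by (field; lra).
    pose proof (Rmult_le_compat_l x _ _ (Rlt_le _ _ hx) H2). lra.
  - apply Rmult_le_compat_r; [apply Rlt_le, Rinv_0_lt_compat; nra|]. nra.
Qed.
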